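(* Let $A\in\mathbb{C}^{n\times n}$, and let $\mathcal{H}(A)=\tfrac12(A+A^{*})$ and $\mathcal{S}(A)=\tfrac12(A-A^{*})$. Then \[|\Lambda(A)|\leq \min\Big\{\big(\operatorname{rank}(\mathcal{H}(A))+1\big)\,|\Lambda(\mathcal{S}(A))|,\ \big(\operatorname{rank}(\mathcal{S}(A))+1\big)\,|\Lambda(\mathcal{H}(A))|\Big\}-d(A).\]
   Context: For $M\in\mathbb{C}^{n\times n}$, $\Lambda(M)$ denotes the set of distinct eigenvalues of $M$ and $|\cdot|$ the cardinality of a set; $A^{*}$ is the conjugate transpose. For $\lambda\in\Lambda(M)$, $m_a(M,\lambda)$ is its algebraic multiplicity and $m_g(M,\lambda)$ its geometric multiplicity. The defectivity of $M$ is $d(M):=\sum_{\lambda\in\Lambda(M)}\big(m_a(M,\lambda)-m_g(M,\lambda)\big)$. *)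

(* complex matrices over R[i] (complex R, from mathcomp-real-closed)
   with R : realType (a complete archimedean ordered field, i.e. the reals). *)
From HB Require Import structures.
From mathcomp Require Import all_boot all_order all_algebra.
From mathcomp Require Import complex.
From mathcomp Require Import finmap boolp classical_sets cardinality reals.
Set Implicit Arguments. Unset Strict Implicit. Unset Printing Implicit Defensive.
Import Order.TTheory GRing.Theory Num.Theory.
Local Open Scope ring_scope.


Section Defs.
Variable C : numClosedFieldType.

Definition ctrmx n (A : 'M[C]_n) : 'M[C]_n := (map_mx Num.conj A)^T.

Definition herm_part n (A : 'M[C]_n) : 'M[C]_n := 2^-1 *: (A + ctrmx A).
Definition skew_part n (A : 'M[C]_n) : 'M[C]_n := 2^-1 *: (A - ctrmx A).

Definition spec n (M : 'M[C]_n) : set C := [set a | eigenvalue M a].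

Definition nspec n (M : 'M[C]_n) : nat := (#|` fset_set (spec M)|)%fset.

Definition alg_mult n (M : 'M[C]_n) (a : C) : nat := mup a (char_poly M).

Definition geo_mult n (M : 'M[C]_n) (a : C) : nat := \rank (eigenspace M a).

Definition defectivity n (M : 'M[C]_n) : nat :=
  (\sum_(a <- fset_set (spec M)) (alg_mult M a - geo_mult M a))%N.
End Defs.

From HB Require Import structures.
From mathcomp Require Import all_boot all_order all_algebra.
From mathcomp Require Import complex.
From mathcomp Require Import finmap boolp classical_sets cardinality reals.
From mathcomp Require Import mxred spectral zify.
Import Order.TTheory GRing.Theory Num.Theory.
Set Implicit Arguments.
Unset Strict Implicit.
Unset Printing Implicit Defensive.
Local Open Scope ring_scope.

(* Split A = X + Q with Q normal, hence diagonalizable: Q = S(A), X = H(A), or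
   the other way round.  For an eigenvalue mu of Q, the vectors of the
   mu-eigenspace of Q killed by X are mu-eigenvectors of A, so
   dim E_Q(mu) <= m_g(A, mu) + rank X.  Summing over Lambda(Q), whose
   eigenspaces span C^n,
     n <= |Lambda(Q)| (rank X + 1) + sum_{mu in Lambda(Q)} (m_g(A, mu) - 1),
   and only eigenvalues of A contribute to the last sum.  On the other hand a
   Schur triangularization of A shows
     n >= sum_{l in Lambda(A)} m_a(A, l)
       = |Lambda(A)| + d(A) + sum_{l in Lambda(A)} (m_g(A, l) - 1). *)

Lemma sum_eq_uniq_le1 (T : eqType) (s : seq T) x : uniq s ->
  (\sum_(a <- s) (x == a) <= 1)%N.
Proof.
move=> s_uniq; have -> : (\sum_(a <- s) (x == a))%N = count_mem x s.
  rewrite -sum1_count [RHS]big_mkcond; apply: eq_bigr => a _.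
  by rewrite /= eq_sym; case: (a == x).
by rewrite count_uniq_mem // leq_b1.
Qed.

Lemma leq_sum_support (T : eqType) (s1 s2 : seq T) (f : T -> nat) :
  uniq s1 -> uniq s2 -> {in s1, forall x, 0 < f x -> x \in s2}%N ->
  (\sum_(x <- s1) f x <= \sum_(x <- s2) f x)%N.
Proof.
move=> s1_uniq s2_uniq supp_f.
rewrite [leqLHS](bigID (fun x => 0 < f x)%N) /= [X in (_ + X)%N]big1 => [|x].
  rewrite addn0; apply: (uniq_sub_le_big_cond leqnn (fun x y => leq_addr y x)).
  - exact: filter_uniq.
  - by rewrite filter_predT.
  - by move=> x; rewrite !mem_filter => /andP[fx_gt0 x_s1]; apply: supp_f.
by rewrite lt0n negbK => /eqP.
Qed.

Section TriangularForms.
Variable F : fieldType.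

Lemma mxrank_lblock_unit m n (x : 'M[F]_m) (c : 'M_(n, m)) (A : 'M_n) :
  x \in unitmx -> \rank (block_mx x 0 c A) = (m + \rank A)%N.
Proof.
move=> x_unit.
have -> : block_mx x 0 c A =
    block_mx 1%:M 0 (c *m invmx x) 1%:M *m block_mx x 0 0 A.
  by rewrite mulmx_block !mulmx0 !mul0mx !mul1mx !addr0 !add0r mulmxKV.
rewrite eqmxMfull; first by rewrite rank_diag_block_mx mxrank_unit.
by rewrite row_full_unit unitmxE det_lblock !det1 mulr1 unitr1.
Qed.

Lemma mxrank_lblock_ge m n (x : 'M[F]_m) (c : 'M_(n, m)) (A : 'M_n) :
  (\rank A <= \rank (block_mx x 0 c A))%N.
Proof.
have extract_A : row_mx 0 1%:M *m block_mx x 0 c A *m col_mx 0 1%:M = A.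
  rewrite mul_row_block mul_row_col !mul0mx !mul1mx !add0r.
  by rewrite mulmx0 mulmx1 add0r.
rewrite -{1}extract_A; apply: leq_trans (mxrankM_maxl _ _) _.
exact: mxrankM_maxr.
Qed.

Lemma trig_mxrank_ge_diag n (M : 'M[F]_n) : is_trig_mx M ->
  (\sum_(i < n) (M i i != 0%R) <= \rank M)%N.
Proof.
move: n M; apply: trigsqmx_ind => [|n x c A _ IH]; first by rewrite big_ord0.
rewrite big_split_ord big_ord1 /= block_mxEul.
under eq_bigr do rewrite block_mxEdr.
have [x0|x_neq0] := eqVneq (x 0 0) 0.
  by rewrite /= add0n (leq_trans IH) ?mxrank_lblock_ge.
rewrite mxrank_lblock_unit /= ?add1n ?ltnS //.
by rewrite unitmxE det_mx11 unitfE.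
Qed.

Lemma trig_mxrank_eigenspace n (T : 'M[F]_n) a : is_trig_mx T ->
  (\rank (eigenspace T a) <= \sum_(i < n) (T i i == a))%N.
Proof.
move=> /is_trig_mxP T_trig.
have Ta_trig : is_trig_mx (T - a%:M).
  apply/is_trig_mxP => i j lt_ij; rewrite !mxE T_trig //.
  by rewrite -val_eqE /= ltn_eqF // mulr0n subr0.
have count_diag :
    (\sum_(i < n) (T i i == a) + \sum_(i < n) ((T - a%:M)%R i i != 0%R) = n)%N.
  rewrite -big_split /= -[RHS]card_ord -sum1_card; apply: eq_bigr => i _.
  by rewrite !mxE eqxx mulr1n subr_eq0; case: eqP.
rewrite mxrank_ker leq_subLR -{1}count_diag addnC leq_add2r.
exact: trig_mxrank_ge_diag.
Qed.

Lemma mup_prod_XsubC (I : Type) (r : seq I) (d : I -> F) a :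
  mup a (\prod_(i <- r) ('X - (d i)%:P)) = (\sum_(i <- r) (d i == a))%N.
Proof.
elim: r => [|i r IH]; first by rewrite !big_nil mupNroot // root1.
rewrite !big_cons mupM ?polyXsubC_eq0 ?monic_neq0 ?monic_prod_XsubC // IH.
by rewrite -[X in mup _ X]expr1 mup_XsubCX; case: eqP.
Qed.

Lemma char_poly_conj n (P A : 'M[F]_n) : P \in unitmx ->
  char_poly (conjmx P A) = char_poly A.
Proof.
move=> P_unit; rewrite conjumx // /char_poly /char_poly_mx.
have -> : 'X%:M - map_mx polyC (P *m A *m invmx P) =
    map_mx polyC P *m ('X%:M - map_mx polyC A) *m map_mx polyC (invmx P).
  rewrite mulmxBr mulmxBl -!map_mxM mul_mx_scalar -scalemxAl -map_mxM.
  by rewrite mulmxV // map_mx1 scalemx1.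
rewrite !det_mulmx !det_map_mx mulrC mulrA -rmorphM -det_mulmx.
by rewrite mulVmx // det1 rmorph1 mul1r.
Qed.

Lemma mxrank_eigenspace_conj n (P A : 'M[F]_n) a : P \in unitmx ->
  \rank (eigenspace (conjmx P A) a) = \rank (eigenspace A a).
Proof.
move=> P_unit; rewrite !mxrank_ker; congr (_ - _)%N.
rewrite -{1}(conjmx_scalar a (_ : row_free P)) ?row_free_unit // !conjumx //.
rewrite -mulmxBl -mulmxBr mxrankMfree ?row_free_unit ?unitmx_inv //.
by rewrite eqmxMfull // row_full_unit.
Qed.

End TriangularForms.

Section ClosedField.
Variable C : numClosedFieldType.

Lemma trigonalizable_closed n (A : 'M[C]_n) : trigonalizable A.
Proof.
case: n A => [|n] A.
  by exists 1%:M; rewrite ?unitmx1 //; apply/is_trig_mxP => -[].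
by have [P /unitarymx_unit P_unit A_trig] := Schur A (ltn0Sn n); exists P.
Qed.

Lemma normalmx_diagonalizable n (Q : 'M[C]_n) :
  Q \is normalmx -> diagonalizable Q.
Proof.
move=> /orthomx_spectralP Q_spectral; have P_unit := spectral_unit Q.
exists (spectralmx Q) => //; rewrite /similar_to conjumx //.
rewrite [X in _ *m X *m _]Q_spectral !mulmxA mulmxV // mul1mx -mulmxA.
by rewrite mulmxV // mulmx1 diag_mx_is_diag.
Qed.

Lemma trig_diag_mult n (A : 'M[C]_n) : exists d : 'I_n -> C, forall a,
  alg_mult A a = (\sum_(i < n) (d i == a))%N /\
  (geo_mult A a <= \sum_(i < n) (d i == a))%N.
Proof.
have [P P_unit T_trig] := trigonalizable_closed A.
exists (fun i => conjmx P A i i) => a; split.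
  rewrite /alg_mult -(char_poly_conj A P_unit) char_poly_trig //.
  exact: mup_prod_XsubC.
rewrite /geo_mult -(mxrank_eigenspace_conj A a P_unit).
exact: trig_mxrank_eigenspace.
Qed.

Lemma geo_mult_le_alg_mult n (A : 'M[C]_n) a :
  (geo_mult A a <= alg_mult A a)%N.
Proof. by have [d /(_ a)[-> ->]] := trig_diag_mult A. Qed.

Lemma sum_alg_mult_le n (A : 'M[C]_n) (s : seq C) : uniq s ->
  (\sum_(a <- s) alg_mult A a <= n)%N.
Proof.
move=> s_uniq; have [d d_mult] := trig_diag_mult A.
under eq_bigr do rewrite (d_mult _).1.
rewrite exchange_big /= -[leqRHS]card_ord -sum1_card.
by apply: leq_sum => i _; apply: sum_eq_uniq_le1.
Qed.

Lemma geo_mult_gt0 n (A : 'M[C]_n) a : (0 < geo_mult A a)%N = eigenvalue A a.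
Proof. by rewrite lt0n mxrank_eq0. Qed.

Lemma spec_finite n (A : 'M[C]_n) : finite_set (spec A).
Proof.
have [d d_mult] := trig_diag_mult A.
apply: (@sub_finite_set _ _ [set` [seq d i | i <- enum 'I_n]]).
  2: exact: finite_seq.
move=> a a_eig; have : (\sum_(i < n) (d i == a) != 0)%N.
  by rewrite -lt0n (leq_trans _ (d_mult a).2) // geo_mult_gt0.
rewrite sum_nat_seq_neq0 => /hasP[i _] /=; case: (d i =P a) => // <- _.
by apply/mapP; exists i; rewrite ?mem_enum.
Qed.

Lemma in_fset_spec n (A : 'M[C]_n) a :
  (a \in fset_set (spec A)) = eigenvalue A a.
Proof.
rewrite in_fset_set; last exact: spec_finite.
by apply/idP/idP => [/set_mem|/mem_set].
Qed.

Lemma nspec_defectivity_le n (A : 'M[C]_n) :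
  (nspec A + defectivity A +
   \sum_(a <- fset_set (spec A)) (geo_mult A a).-1 <= n)%N.
Proof.
apply: leq_trans (sum_alg_mult_le A (fset_uniq _)).
rewrite /nspec /defectivity card_fset_sum1 -!big_split /=.
apply: eq_leq; apply: eq_big_seq => a; rewrite in_fset_spec -geo_mult_gt0.
by have := geo_mult_le_alg_mult A a; lia.
Qed.

Lemma geo_mult_le_addl n (X Q : 'M[C]_n) a :
  (geo_mult Q a <= geo_mult (X + Q) a + \rank X)%N.
Proof.
set W := (eigenspace Q a :&: kermx X)%MS.
have W_eig : (W <= eigenspace (X + Q) a)%MS.
  apply/eigenspaceP; rewrite mulmxDr.
  have /sub_kermxP -> : (W <= kermx X)%MS by apply: capmxSr.
  have /eigenspaceP -> : (W <= eigenspace Q a)%MS by apply: capmxSl.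
  by rewrite add0r.
have := mxrank_sum_cap (eigenspace Q a) (kermx X).
have := rank_leq_col (eigenspace Q a + kermx X)%MS.
have := mxrankS W_eig; have := rank_leq_row X.
rewrite mxrank_ker -/W /geo_mult; lia.
Qed.

Lemma diagonalizable_sum_geo_mult n (Q : 'M[C]_n) : diagonalizable Q ->
  (n <= \sum_(a <- fset_set (spec Q)) geo_mult Q a)%N.
Proof.
move=> /diagonalizablePeigen[rs rs_uniq rs_full].
have rank_sum : (\rank (\sum_(a <- rs) eigenspace Q a)%MS <=
    \sum_(a <- rs) \rank (eigenspace Q a))%N := (mxrank_sum_leqif _).1.
rewrite rs_full mxrank1 in rank_sum; apply: leq_trans rank_sum _.
apply: leq_sum_support; rewrite ?fset_uniq // => a _.
by rewrite geo_mult_gt0 in_fset_spec.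
Qed.

Lemma nspec_defectivity_le_addl n (X Q : 'M[C]_n) : diagonalizable Q ->
  (nspec (X + Q) + defectivity (X + Q) <= (\rank X).+1 * nspec Q)%N.
Proof.
move=> Q_diag; set A := X + Q.
have eig_Q := diagonalizable_sum_geo_mult Q_diag.
have perturb : (\sum_(a <- fset_set (spec Q)) geo_mult Q a <=
    \sum_(a <- fset_set (spec Q)) (geo_mult A a).-1 + (\rank X).+1 * nspec Q)%N.
  rewrite /nspec card_fset_sum1 big_distrr /= -big_split /=.
  apply: leq_sum => a _; apply: leq_trans (geo_mult_le_addl X Q a) _.
  by rewrite muln1 addnS -addSn leq_add2r leqSpred.
have support : (\sum_(a <- fset_set (spec Q)) (geo_mult A a).-1 <=
    \sum_(a <- fset_set (spec A)) (geo_mult A a).-1)%N.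
  apply: leq_sum_support; rewrite ?fset_uniq // => a _.
  by rewrite -subn1 subn_gt0 in_fset_spec -geo_mult_gt0; apply: ltnW.
have := nspec_defectivity_le A; lia.
Qed.

End ClosedField.

Section HermitianSkewParts.
Variable C : numClosedFieldType.
Local Open Scope sesquilinear_scope.

Lemma herm_skew_partE n (A : 'M[C]_n) : A = herm_part A + skew_part A.
Proof.
rewrite /herm_part /skew_part -scalerDr addrACA subrr addr0 -mulr2n.
by rewrite -scaler_nat scalerA mulVf ?scale1r // pnatr_eq0.
Qed.

Lemma herm_part_normal n (A : 'M[C]_n) : herm_part A \is normalmx.
Proof.
have herm_selfadj : (herm_part A)^t* = herm_part A.
  apply/matrixP => i j; rewrite !mxE /= rmorphM rmorphD /= conjCK fmorphV.
  by rewrite rmorph_nat addrC.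
by apply/normalmxP; rewrite herm_selfadj.
Qed.

Lemma skew_part_normal n (A : 'M[C]_n) : skew_part A \is normalmx.
Proof.
have skew_adj : (skew_part A)^t* = - skew_part A.
  apply/matrixP => i j; rewrite !mxE /= rmorphM rmorphB /= conjCK fmorphV.
  by rewrite rmorph_nat -mulrN opprB.
by apply/normalmxP; rewrite skew_adj mulmxN mulNmx.
Qed.

Theorem nspec_le_rank_parts n (A : 'M[C]_n) :
  (nspec A <=
     minn ((\rank (herm_part A)).+1 * nspec (skew_part A))
          ((\rank (skew_part A)).+1 * nspec (herm_part A))
     - defectivity A)%N.
Proof.
have bound_skew := nspec_defectivity_le_addl (herm_part A)
  (normalmx_diagonalizable (skew_part_normal A)).
have bound_herm := nspec_defectivity_le_addl (skew_part A)
  (normalmx_diagonalizable (herm_part_normal A)).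
rewrite -herm_skew_partE in bound_skew.
rewrite addrC -herm_skew_partE in bound_herm.
have bound_min : (nspec A + defectivity A <= minn
    ((\rank (herm_part A)).+1 * nspec (skew_part A))
    ((\rank (skew_part A)).+1 * nspec (herm_part A)))%N.
  by rewrite leq_min bound_skew bound_herm.
rewrite leq_subRL; first by rewrite addnC.
exact: leq_trans (leq_addl _ _) bound_min.
Qed.

End HermitianSkewParts.

Local Open Scope complex_scope.

Theorem corollary4p4 (R : realType) (n : nat) (A : 'M[R[i]]_n) :
  (nspec A <=
     minn ((\rank (herm_part A)).+1 * nspec (skew_part A))
          ((\rank (skew_part A)).+1 * nspec (herm_part A))
     - defectivity A)%N.
Proof. exact: nspec_le_rank_parts. Qed.
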